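(* Let $\kappa$ be a regular infinite cardinal. For each $i\in\{a,b\}$ (with $j$ the other player) there is a function $T_i:W^\kappa\to\Delta(W^\kappa,\mathrm{Pow}(W^\kappa))$ such that for all $w^\kappa\in W^\kappa$: (a) $T_i(u^\kappa)=T_i(w^\kappa)$ for all $u^\kappa\in P_i(w^\kappa)$; (b) $T_i(w^\kappa)(P_i(w^\kappa))=1$; (c) $T_i(w^\kappa)([X_0^\kappa=w_0])$ equals $1$ if $w_i^\kappa(0)=1$ and $\tfrac12$ if $w_i^\kappa(0)=0$; (d) for every $\beta<\kappa$, $T_i(w^\kappa)([X_j^\kappa(\beta)=w_j^\kappa(\beta)])$ equals $1$ if $w_i^\kappa(\beta+1)=1$ and $\tfrac12$ if $w_i^\kappa(\beta+1)=0$; (e) for every limit ordinal $\lambda<\kappa$, $T_i(w^\kappa)([\lambda\text{-par}(X_j^\kappa)=\lambda\text{-par}(w_j^\kappa)])$ equals $1$ if $w_i^\kappa(\lambda)=1$ and $\tfrac12$ if $w_i^\kappa(\lambda)=0$; (f) for all $0\le\beta<\alpha<\kappa$, all $u^\kappa,w^\kappa\in W^\kappa$ and all $E^\beta\subseteq W^\beta$: if $u^\kappa\upharpoonright\alpha=w^\kappa\upharpoonright\alpha$ then $T_i(u^\kappa)(\pi_{\beta,\kappa}^{-1}(E^\beta))=T_i(w^\kappa)(\pi_{\beta,\kappa}^{-1}(E^\beta))$.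
   Context: $\Delta(M,\mathrm{Pow}(M))$ is the set of finitely additive probability measures on all subsets of $M$. For an ordinal $\alpha\ge1$, a record of length $\alpha$ is a sequence $r=(r(\beta))_{\beta<\alpha}$ in $\{0,1\}$ such that for every limit ordinal $\lambda\le\alpha$ there is $\gamma<\lambda$ with $r(\beta)=0$ for all $\gamma\le\beta<\lambda$. Parity of ordinals: finite ordinals have the usual parity (0 is even); an infinite ordinal $\gamma=\hat\lambda+n$ ($\hat\lambda$ limit, $n$ finite) is even/odd as $n$ is. For a record $r$ of length $\alpha$ and limit $\lambda\le\alpha$, $o^\lambda(r)$ is the least ordinal $<\lambda$ with $r(\beta)=0$ for all $o^\lambda(r)\le\beta<\lambda$, and $\lambda\text{-par}(r)$ is the parity of $o^\lambda(r)$. $W^0=\{h,t\}$; for $\alpha\ge1$, $W^\alpha$ is the set of triples $w^\alpha=(w_0,w_a^\alpha,w_b^\alpha)$ with $w_0\in\{h,t\}$ and $w_a^\alpha,w_b^\alpha$ records of length $\alpha$. For $0<\beta\le\alpha$, $w^\alpha\upharpoonright\beta=(w_0,w_a^\alpha\upharpoonright\beta,w_b^\alpha\upharpoonright\beta)$ (restricting the sequences), and $w^\alpha\upharpoonright0=w_0$; $\pi_{\beta,\alpha}:W^\alpha\to W^\beta$, $w^\alpha\mapsto w^\alpha\upharpoonright\beta$. For $\alpha>0$, $i\in\{a,b\}$, $j$ the other player: $P_i(w^\alpha)$ is the set of $v^\alpha=(v_0,v_a^\alpha,v_b^\alpha)\in W^\alpha$ with $v_i^\alpha=w_i^\alpha$;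 $w_i^\alpha(0)=1\Rightarrow v_0=w_0$; for all $\beta$ with $\beta+1<\alpha$, $w_i^\alpha(\beta+1)=1\Rightarrow v_j^\alpha(\beta)=w_j^\alpha(\beta)$; for all limit $\lambda<\alpha$, $w_i^\alpha(\lambda)=1\Rightarrow\lambda\text{-par}(v_j^\alpha)=\lambda\text{-par}(w_j^\alpha)$. Notation: $[X_0^\kappa=w_0]=\{u\in W^\kappa:u_0=w_0\}$; $[X_j^\kappa(\beta)=c]=\{u\in W^\kappa:u_j^\kappa(\beta)=c\}$; $[\lambda\text{-par}(X_j^\kappa)=e]=\{u\in W^\kappa:\lambda\text{-par}(u_j^\kappa)=e\}$. *)

From Stdlib Require Import Reals Classical ClassicalEpsilon.
Set Implicit Arguments.
Open Scope R_scope.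

(* kappa, presented as the well-ordered set of ordinals below it. *)
Record RegCard := {
  ord :> Type;
  olt : ord -> ord -> Prop;
  olt_irrefl : forall x, ~ olt x x;
  olt_trans : forall x y z, olt x y -> olt y z -> olt x z;
  olt_total : forall x y, olt x y \/ x = y \/ olt y x;
  olt_wf : forall S : ord -> Prop, (exists x, S x) ->
             exists m, S m /\ forall y, S y -> ~ olt y m;
  ord_infinite : exists f : nat -> ord, forall m n, f m = f n -> m = n;
  (* kappa is a cardinal (initial ordinal): every beta < kappa has |beta| < kappa *)
  ord_initial : forall x : ord,
      ~ exists f : ord -> {y | olt y x}, forall a b, f a = f b -> a = b;
  (* kappa is regular: every cofinal subset has cardinality kappa *)
  ord_regular : forall S : ord -> Prop,
      (forall x, exists y, S y /\ ~ olt y x) ->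
      exists f : ord -> {y | S y}, forall a b, f a = f b -> a = b
}.

Lemma ord_inhabited (k : RegCard) : inhabited k.
Proof. destruct (ord_infinite k) as [f _]. exact (inhabits (f O)). Qed.

Inductive coin := h | t.
Inductive player := pa | pb.
Definition other (i : player) : player := match i with pa => pb | pb => pa end.

Section Defs.
Variable k : RegCard.

Definition ole (x y : k) : Prop := olt k x y \/ x = y.

Definition is_zero (z : k) : Prop := forall x, ole z x.
Definition ozero : k := epsilon (ord_inhabited k) is_zero.

Definition is_succ (x y : k) : Prop := olt k x y /\ forall z, olt k x z -> ole y z.
(* the successor beta+1 (exists since kappa is a limit ordinal) *)
Definition osucc (x : k) : k := epsilon (inhabits x) (is_succ x).

Definition is_limit (l : k) : Prop := ~ is_zero l /\ ~ exists x, is_succ x l.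

Definition even_ord (g : k) : Prop :=
  exists l n, (is_zero l \/ is_limit l) /\ Nat.iter n osucc l = g /\ Nat.even n = true.

Definition full_record (r : k -> bool) : Prop :=
  (forall l, is_limit l -> exists g, olt k g l /\
       forall b, ole g b -> olt k b l -> r b = false) /\
  (exists g, forall b, ole g b -> r b = false).

Definition record_of (be : k) (r : {x | olt k x be} -> bool) : Prop :=
  forall l, is_limit l -> ole l be -> exists g, olt k g l /\
    forall b (Hb : olt k b be), ole g b -> olt k b l -> r (exist _ b Hb) = false.

Definition lpar_even (r : k -> bool) (l : k) : Prop :=
  exists o, olt k o l /\ (forall b, ole o b -> olt k b l -> r b = false) /\
    (forall o', olt k o' l -> (forall b, ole o' b -> olt k b l -> r b = false) -> ole o o') /\
    even_ord o.

Record Wk := mkWk {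
  w0 : coin; wa : k -> bool; wb : k -> bool;
  wa_rec : full_record wa; wb_rec : full_record wb }.

Definition wpl (i : player) (w : Wk) : k -> bool :=
  match i with pa => wa w | pb => wb w end.

(* W^be for 0 < be < kappa *)
Record Wsub (be : k) := mkWsub {
  s0 : coin; sa : {x | olt k x be} -> bool; sb : {x | olt k x be} -> bool;
  sa_rec : @record_of be sa; sb_rec : @record_of be sb }.

Lemma restr_record (be : k) (r : k -> bool) :
  full_record r -> @record_of be (fun x : {x | olt k x be} => r (proj1_sig x)).
Proof.
  intros [H _] l Hl _. destruct (H l Hl) as [g [Hg1 Hg2]].
  exists g. split; [exact Hg1|]. intros b Hb Hgb Hbl. simpl. exact (Hg2 b Hgb Hbl).
Qed.

(* pi_{be,kappa} : W^kappa -> W^be  (be nonzero) *)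
Definition restr (be : k) (w : Wk) : Wsub be :=
  @mkWsub be (w0 w) (fun x => wa w (proj1_sig x)) (fun x => wb w (proj1_sig x))
    (@restr_record be _ (wa_rec w)) (@restr_record be _ (wb_rec w)).

Definition Pinfo (i : player) (w : Wk) (v : Wk) : Prop :=
  let j := other i in
  wpl i v = wpl i w /\
  (wpl i w ozero = true -> w0 v = w0 w) /\
  (forall be, wpl i w (osucc be) = true -> wpl j v be = wpl j w be) /\
  (forall l, is_limit l -> wpl i w l = true ->
      (lpar_even (wpl j v) l <-> lpar_even (wpl j w) l)).

End Defs.

Definition fa_prob (T : Type) (mu : (T -> Prop) -> R) : Prop :=
  (forall A, 0 <= mu A) /\ mu (fun _ => True) = 1 /\
  (forall A B : T -> Prop, (forall x, A x -> B x -> False) ->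
      mu (fun x => A x \/ B x) = mu A + mu B).

(* T_i(w) is the average of two finitely additive 0-1 measures: the limits, along an
   ultrafilter on finite lists d of ordinals containing every set {d | beta in d}, of the
   point masses at two worlds [sample w d false] and [sample w d true].  Both lie in P_i(w):
   they keep w_i, keep w_0 when i knows it, and keep w_j(beta) whenever w_i(beta+1) = 1.
   Where i knows nothing and the ordinal is in d they disagree (coin h against t, bit 0
   against 1), so such an event gets probability 1/2.  The parity of the guessed record at a
   limit lambda is set by its last 1s below lambda, placed at [gap lambda] and possibly
   [gap lambda + 1], above every ordinal below lambda that is known to i or listed in d: they
   reproduce w_j's parity when i knows it, and give the two samples opposite parities when
   lambda is in d.  Once beta is in d, the samples below beta only depend on w below beta + 1,
   which gives (f). *)

From Stdlib Require Import Reals List Lra.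
From Stdlib Require Import Classical ClassicalEpsilon ProofIrrelevance FunctionalExtensionality.
From mathcomp Require classical_sets filter.

Set Implicit Arguments.
Unset Strict Implicit.
Open Scope R_scope.

Definition to_bool (P : Prop) : bool := if excluded_middle_informative P then true else false.

Lemma to_bool_true P : to_bool P = true <-> P.
Proof. unfold to_bool. destruct (excluded_middle_informative P); split; easy. Qed.

Lemma to_bool_false P : ~ P -> to_bool P = false.
Proof. unfold to_bool. now destruct (excluded_middle_informative P). Qed.

Lemma to_bool_ext P Q : (P <-> Q) -> to_bool P = to_bool Q.
Proof.
  intros HPQ. unfold to_bool.
  destruct (excluded_middle_informative P), (excluded_middle_informative Q); tauto.
Qed.

Lemma fa_prob_comap (A B : Type) (f : A -> B) (mu : (A -> Prop) -> R) :
  fa_prob mu -> fa_prob (fun P : B -> Prop => mu (fun x => P (f x))).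
Proof.
  intros [Hpos [Htot Hadd]]. split; [|split]; [intros P; apply Hpos|exact Htot|].
  intros P Q HPQ. apply Hadd. intros x. apply HPQ.
Qed.

Lemma fa_prob_avg (A : Type) (mu nu : (A -> Prop) -> R) :
  fa_prob mu -> fa_prob nu -> fa_prob (fun P => / 2 * mu P + / 2 * nu P).
Proof.
  intros [Hpos [Htot Hadd]] [Hpos' [Htot' Hadd']]. split; [|split].
  - intros P. specialize (Hpos P). specialize (Hpos' P). lra.
  - rewrite Htot, Htot'. lra.
  - intros P Q HPQ. rewrite (Hadd P Q HPQ), (Hadd' P Q HPQ). lra.
Qed.

Record ultrafilter (A : Type) := {
  uf_mem :> (A -> Prop) -> Prop;
  uf_and : forall P Q, uf_mem P -> uf_mem Q -> uf_mem (fun x => P x /\ Q x);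
  uf_mono : forall P Q : A -> Prop, (forall x, P x -> Q x) -> uf_mem P -> uf_mem Q;
  uf_proper : ~ uf_mem (fun _ => False);
  uf_ultra : forall P, uf_mem P \/ uf_mem (fun x => ~ P x) }.

Arguments uf_and {A} u {P Q}.
Arguments uf_mono {A} u {P Q}.
Arguments uf_proper {A} u.
Arguments uf_ultra {A} u P.

Section UltrafilterMass.
Variables (A : Type) (U : ultrafilter A).

Definition uf_mass (P : A -> Prop) : R := if excluded_middle_informative (U P) then 1 else 0.

Lemma uf_full : U (fun _ => True).
Proof.
  destruct (uf_ultra U (fun _ => False)) as [H|H]; [destruct (uf_proper U H)|].
  apply (uf_mono U (P := fun _ => ~ False)); auto.
Qed.

Lemma uf_disjoint P Q : (forall x, P x -> Q x -> False) -> U P -> ~ U Q.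
Proof.
  intros HPQ HP HQ. apply (uf_proper U).
  apply (uf_mono U (P := fun x => P x /\ Q x)); [intros x [HPx HQx]; exact (HPQ x HPx HQx)|exact (uf_and U HP HQ)].
Qed.

Lemma uf_compl P : U (fun x => ~ P x) <-> ~ U P.
Proof.
  split; [|intros HnP; destruct (uf_ultra U P); tauto].
  intros HnP HP. exact (uf_disjoint (Q := fun x => ~ P x) (fun x Hx Hnx => Hnx Hx) HP HnP).
Qed.

Lemma uf_or P Q : U (fun x => P x \/ Q x) <-> U P \/ U Q.
Proof.
  split.
  - intros HPQ. apply NNPP. intros Hn. apply (uf_proper U).
    apply (uf_mono U (P := fun x => (P x \/ Q x) /\ (~ P x /\ ~ Q x))); [tauto|].
    apply (uf_and U HPQ), (uf_and U); apply uf_compl; tauto.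
  - intros [HP|HQ]; [apply (uf_mono U (P := P))|apply (uf_mono U (P := Q))]; auto.
Qed.

Lemma uf_mem_congr Q P1 P2 : U Q -> (forall x, Q x -> (P1 x <-> P2 x)) -> U P1 -> U P2.
Proof.
  intros HQ H HP1. apply (uf_mono U (P := fun x => P1 x /\ Q x)); [|exact (uf_and U HP1 HQ)].
  intros x [Hx HQx]. now apply (H x HQx).
Qed.

Lemma uf_mass_all P : (forall x, P x) -> uf_mass P = 1.
Proof.
  intros HP. unfold uf_mass.
  destruct (excluded_middle_informative (U P)) as [_|HnP]; [reflexivity|].
  destruct HnP. exact (uf_mono U (fun x _ => HP x) uf_full).
Qed.

Lemma uf_mass_congr Q P1 P2 : U Q -> (forall x, Q x -> (P1 x <-> P2 x)) ->
  uf_mass P1 = uf_mass P2.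
Proof.
  intros HQ H. unfold uf_mass.
  destruct (excluded_middle_informative (U P1)) as [H1|H1],
    (excluded_middle_informative (U P2)) as [H2|H2]; try reflexivity.
  - destruct H2. exact (uf_mem_congr HQ H H1).
  - destruct H1. apply (uf_mem_congr (P1 := P2) HQ); [|exact H2]. intros x Hx. now rewrite (H x Hx).
Qed.

Lemma uf_mass_compl Q P1 P2 : U Q -> (forall x, Q x -> (P2 x <-> ~ P1 x)) ->
  uf_mass P1 + uf_mass P2 = 1.
Proof.
  intros HQ H. rewrite (uf_mass_congr (P2 := fun x => ~ P1 x) HQ H). unfold uf_mass.
  destruct (excluded_middle_informative (U P1)) as [H1|H1],
    (excluded_middle_informative (U (fun x => ~ P1 x))) as [H2|H2];
    rewrite uf_compl in H2; tauto || lra.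
Qed.

Lemma uf_mass_fa_prob : fa_prob uf_mass.
Proof.
  unfold uf_mass. split; [|split].
  - intros P. destruct (excluded_middle_informative (U P)); lra.
  - destruct (excluded_middle_informative (U (fun _ => True))) as [_|H]; [reflexivity|].
    destruct (H uf_full).
  - intros P Q HPQ. pose proof (uf_disjoint HPQ) as Hdisj. pose proof (uf_or P Q) as Hor.
    destruct (excluded_middle_informative (U (fun x => P x \/ Q x))),
      (excluded_middle_informative (U P)), (excluded_middle_informative (U Q));
      solve [lra | tauto].
Qed.

End UltrafilterMass.

Lemma list_ultrafilter_exists (A : Type) :
  exists U : ultrafilter (list A), forall x, U (fun d => In x d).
Proof.
  pose (B := fun l d : list A => forall x, In x l -> In x d).
  assert (HF : filter.Filter (filter.filter_from classical_sets.setT B)).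
  { apply filter.filter_fromT_filter; [now exists nil|].
    intros l1 l2. exists (l1 ++ l2). intros d Hd.
    split; intros x Hx; apply Hd, in_or_app; auto. }
  assert (HP : filter.ProperFilter (filter.filter_from classical_sets.setT B)).
  { apply filter.filter_from_proper; [exact HF|]. intros l _. now exists l. }
  destruct (filter.ultraFilterLemma HP) as [G [HG HFG]].
  unshelve eexists (@Build_ultrafilter _ G _ _ _ _).
  - intros P Q. apply filter.filterI.
  - intros P Q. apply filter.filterS.
  - apply (filter.filter_not_empty G).
  - intros P. exact (filter.in_ultra_setVsetC P HG).
  - intros x. apply HFG. exists (x :: nil); [exact I|]. intros d Hd. apply Hd. now left.
Qed.

Section Kappa.
Variable k : RegCard.

Local Notation "x <o y" := (olt k x y) (at level 70).
Local Notation "x <=o y" := (ole k x y) (at level 70).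
Local Notation succ := (osucc k).
Local Notation zero := (ozero k).

Lemma ole_refl x : x <=o x.
Proof. now right. Qed.

Lemma oltW x y : x <o y -> x <=o y.
Proof. now left. Qed.

Lemma ole_lt_trans x y z : x <=o y -> y <o z -> x <o z.
Proof. intros [Hxy| <-] Hyz; [exact (olt_trans k _ _ _ Hxy Hyz)|exact Hyz]. Qed.

Lemma olt_le_trans x y z : x <o y -> y <=o z -> x <o z.
Proof. intros Hxy [Hyz| <-]; [exact (olt_trans k _ _ _ Hxy Hyz)|exact Hxy]. Qed.

Lemma ole_trans x y z : x <=o y -> y <=o z -> x <=o z.
Proof. intros [Hxy| <-] Hyz; [left; exact (olt_le_trans Hxy Hyz)|exact Hyz]. Qed.

Lemma olt_nle x y : x <o y -> ~ y <=o x.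
Proof. intros Hxy Hyx. exact (olt_irrefl k x (olt_le_trans Hxy Hyx)). Qed.

Lemma ole_of_nlt x y : ~ x <o y -> y <=o x.
Proof.
  intros H. destruct (olt_total k x y) as [Hxy|[<-|Hyx]];
    [contradiction|apply ole_refl|now left].
Qed.

Lemma olt_of_nle x y : ~ x <=o y -> y <o x.
Proof.
  intros H. destruct (olt_total k x y) as [Hxy|[<-|Hyx]];
    [destruct H; now left|destruct H; apply ole_refl|exact Hyx].
Qed.

Lemma ole_antisym x y : x <=o y -> y <=o x -> x = y.
Proof. intros [Hxy|Hxy] Hyx; [destruct (olt_nle Hxy Hyx)|exact Hxy]. Qed.

Lemma ord_ind (P : k -> Prop) : (forall x, (forall y, y <o x -> P y) -> P x) -> forall x, P x.
Proof.
  intros IH x. apply NNPP. intros Hx.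
  destruct (olt_wf k (fun z => ~ P z)) as [m [Hm Hmin]]; [now exists x|].
  apply Hm, IH. intros y Hy. apply NNPP. intros Hny. exact (Hmin y Hny Hy).
Qed.

Definition least (P : k -> Prop) (m : k) : Prop := P m /\ forall y, P y -> m <=o y.

Lemma least_exists (P : k -> Prop) : (exists x, P x) -> exists m, least P m.
Proof.
  intros HP. destruct (olt_wf k P HP) as [m [Hm Hmin]].
  exists m. split; [exact Hm|]. intros y Hy. apply ole_of_nlt, Hmin, Hy.
Qed.

Lemma least_unique (P Q : k -> Prop) m n :
  least P m -> least Q n -> (forall x, P x <-> Q x) -> m = n.
Proof.
  intros [Hm Hmin] [Hn Hnin] HPQ.
  apply ole_antisym; [apply Hmin, HPQ, Hn|apply Hnin, HPQ, Hm].
Qed.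

Lemma ozero_le x : zero <=o x.
Proof.
  revert x. change (is_zero k zero). unfold ozero. apply epsilon_spec.
  destruct (least_exists (P := fun _ => True)) as [m [_ Hm]]; [now exists zero|].
  exists m. intros x. now apply Hm.
Qed.

(* If [x] were the largest ordinal, [{x}] would be cofinal, and regularity
   would inject the infinite [k] into a singleton. *)
Lemma exists_gt x : exists y, x <o y.
Proof.
  apply NNPP. intros Hmax.
  destruct (ord_regular k (fun y => y = x)) as [f Hf].
  { intros z. exists x. split; [reflexivity|]. intros Hxz. apply Hmax. now exists z. }
  destruct (ord_infinite k) as [g Hg].
  assert (Hf01 : f (g 0%nat) = f (g 1%nat)).
  { destruct (f (g 0%nat)) as [a Ha], (f (g 1%nat)) as [b Hb]. now subst. }
  discriminate (Hg _ _ (Hf _ _ Hf01)).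
Qed.

Lemma osucc_spec x : is_succ k x (succ x).
Proof.
  unfold osucc. apply epsilon_spec.
  destruct (least_exists (exists_gt x)) as [m Hm]. now exists m.
Qed.

Lemma olt_succ x : x <o succ x.
Proof. apply osucc_spec. Qed.

Lemma osucc_le x z : x <o z -> succ x <=o z.
Proof. apply osucc_spec. Qed.

Lemma osucc_lt_limit l x : is_limit k l -> x <o l -> succ x <o l.
Proof.
  intros [_ Hl] Hx. destruct (osucc_le Hx) as [Hsx|Hsx]; [exact Hsx|].
  destruct Hl. exists x. rewrite <- Hsx. apply osucc_spec.
Qed.

Lemma is_succ_osucc x g : is_succ k x g -> g = succ x.
Proof.
  intros [Hxg Hmin]. apply ole_antisym; [apply Hmin, olt_succ|exact (osucc_le Hxg)].
Qed.

Lemma osucc_mono x y : x <o y -> succ x <o succ y.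
Proof. intros Hxy. exact (ole_lt_trans (osucc_le Hxy) (olt_succ y)). Qed.

Lemma osucc_le_mono x y : x <=o y -> succ x <=o succ y.
Proof. intros [Hxy| <-]; [left; exact (osucc_mono Hxy)|apply ole_refl]. Qed.

Lemma osucc_inj x y : succ x = succ y -> x = y.
Proof.
  intros Hs. destruct (olt_total k x y) as [Hxy|[Hxy|Hxy]]; [|exact Hxy|];
    apply osucc_mono in Hxy; rewrite Hs in Hxy; destruct (olt_irrefl k _ Hxy).
Qed.

Definition zero_or_limit (l : k) : Prop := is_zero k l \/ is_limit k l.

Lemma ord_decomp g : exists l n, zero_or_limit l /\ Nat.iter n succ l = g.
Proof.
  induction g as [g IH] using ord_ind.
  destruct (classic (zero_or_limit g)) as [Hg|Hg]; [now exists g, 0%nat|].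
  assert (Hs : exists x, is_succ k x g).
  { apply NNPP. intros Hns. apply Hg. right. split; [intros Hz; apply Hg; now left|exact Hns]. }
  destruct Hs as [x Hx]. destruct (IH x (proj1 Hx)) as [l [n [Hl Hn]]].
  exists l, (S n). split; [exact Hl|]. simpl. rewrite Hn. symmetry. exact (is_succ_osucc Hx).
Qed.

Lemma osucc_not_zero_or_limit x : ~ zero_or_limit (succ x).
Proof.
  intros [Hz|[_ Hl]]; [exact (olt_nle (olt_succ x) (Hz x))|].
  apply Hl. exists x. apply osucc_spec.
Qed.

Lemma ord_decomp_unique n m l l' : zero_or_limit l -> zero_or_limit l' ->
  Nat.iter n succ l = Nat.iter m succ l' -> n = m.
Proof.
  intros Hl Hl'. revert m. induction n as [|n IH]; intros [|m] Hnm; simpl in Hnm.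
  - reflexivity.
  - subst l. destruct (osucc_not_zero_or_limit Hl).
  - rewrite <- Hnm in Hl'. destruct (osucc_not_zero_or_limit Hl').
  - f_equal. apply IH. exact (osucc_inj Hnm).
Qed.

Lemma even_ord_succ g : even_ord k (succ g) <-> ~ even_ord k g.
Proof.
  split.
  - intros [l [n [Hl [Hn He]]]] [l' [m [Hl' [Hm He']]]].
    assert (Hnm : n = S m) by (apply (ord_decomp_unique Hl Hl'); simpl; congruence).
    subst n. rewrite Nat.even_succ, <- Nat.negb_even, He' in He. discriminate.
  - intros Hodd. destruct (ord_decomp g) as [l [n [Hl Hn]]].
    exists l, (S n). split; [exact Hl|split; [simpl; congruence|]].
    rewrite Nat.even_succ, <- Nat.negb_even.
    destruct (Nat.even n) eqn:He; [|reflexivity].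
    destruct Hodd. now exists l, n.
Qed.

Lemma lpar_even_last_one (r : k -> bool) l g : is_limit k l -> g <o l -> r g = true ->
  (forall b, g <o b -> b <o l -> r b = false) ->
  (lpar_even k r l <-> even_ord k (succ g)).
Proof.
  intros Hl Hgl Hg Htail.
  assert (Hsgl : succ g <o l) by exact (osucc_lt_limit Hl Hgl).
  assert (Hzero : forall b, succ g <=o b -> b <o l -> r b = false)
    by (intros b Hb Hbl; exact (Htail b (olt_le_trans (olt_succ g) Hb) Hbl)).
  assert (Hmin : forall o, o <o l -> (forall b, o <=o b -> b <o l -> r b = false) ->
                 succ g <=o o).
  { intros o Ho Hz. apply osucc_le, olt_of_nle. intros Hog.
    rewrite (Hz g Hog Hgl) in Hg. discriminate. }
  split.
  - intros [o [Ho [Hz [Homin Heven]]]].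
    replace (succ g) with o; [exact Heven|].
    exact (ole_antisym (Homin _ Hsgl Hzero) (Hmin o Ho Hz)).
  - intros Heven. exists (succ g). repeat split; assumption.
Qed.

Lemma list_bound (P : k -> Prop) (d : list k) g :
  (forall x, P x -> P (succ x)) -> P g ->
  exists G, P G /\ g <=o G /\ forall s, In s d -> P s -> s <o G.
Proof.
  intros HP Hg. induction d as [|a d IH].
  - exists g. split; [exact Hg|split; [apply ole_refl|intros s []]].
  - destruct IH as [G [HG [HgG Hd]]].
    destruct (classic (P a /\ G <=o a)) as [[Ha HGa]|Ha].
    + assert (HGs : G <=o succ a) by exact (ole_trans HGa (oltW (olt_succ a))).
      exists (succ a). split; [exact (HP a Ha)|split; [exact (ole_trans HgG HGs)|]].
      intros s [<-|Hs] Hps; [apply olt_succ|exact (olt_le_trans (Hd s Hs Hps) HGs)].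
    + exists G. split; [exact HG|split; [exact HgG|]].
      intros s [<-|Hs] Hps; [|exact (Hd s Hs Hps)].
      apply olt_of_nle. intros HGs. apply Ha. now split.
Qed.


Section Guess.
Variables (Wi Wj : k -> bool) (d : list k) (F : k -> Prop) (e : bool).
Hypothesis HWi : full_record k Wi.

Definition marked (s : k) : Prop := Wi s = true \/ In s d.

Definition gap_candidate (l g : k) : Prop :=
  g <o l /\ forall s, marked s -> s <o l -> s <o g.

Definition gap (l : k) : k := epsilon (inhabits l) (least (gap_candidate l)).

Definition controlled (l : k) : Prop := is_limit k l /\ marked l.

Definition parity_mark (l p : k) : Prop :=
  controlled l /\ (p = gap l \/ (p = succ (gap l) /\ F l)).

Definition guess (p : k) : bool :=
  if Wi (succ p) then Wj p else to_bool ((exists l, parity_mark l p) \/ (e = true /\ In p d)).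

Lemma marked_bound : exists G, forall s, marked s -> s <o G.
Proof.
  destruct (proj2 HWi) as [g Hg].
  destruct (list_bound (P := fun _ => True) (g := g) d) as [G [_ [HgG Hd]]]; [easy|easy|].
  exists G. intros s [Hs|Hs]; [|exact (Hd s Hs I)].
  apply (olt_le_trans (y := g)); [|exact HgG].
  apply olt_of_nle. intros Hgs. rewrite (Hg s Hgs) in Hs. discriminate.
Qed.

Lemma marked_bound_below l : is_limit k l ->
  exists G, G <o l /\ forall s, marked s -> s <o l -> s <o G.
Proof.
  intros Hl. destruct (proj1 HWi l Hl) as [g [Hgl Hg]].
  destruct (list_bound (P := fun x => x <o l) (g := g) d) as [G [HGl [HgG Hd]]];
    [intros x; exact (osucc_lt_limit Hl)|exact Hgl|].
  exists G. split; [exact HGl|]. intros s [Hs|Hs] Hsl; [|exact (Hd s Hs Hsl)].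
  apply (olt_le_trans (y := g)); [|exact HgG].
  apply olt_of_nle. intros Hgs. rewrite (Hg s Hgs Hsl) in Hs. discriminate.
Qed.

Lemma gap_least l : is_limit k l -> least (gap_candidate l) (gap l).
Proof.
  intros Hl. unfold gap. apply epsilon_spec, least_exists.
  destruct (marked_bound_below Hl) as [G HG]. now exists G.
Qed.

Lemma gap_lt l : is_limit k l -> gap l <o l.
Proof. intros Hl. apply (gap_least Hl). Qed.

Lemma unmarked_above_gap l s : is_limit k l -> gap l <=o s -> s <o l -> ~ marked s.
Proof.
  intros Hl Hs Hsl Hm. exact (olt_nle (proj2 (proj1 (gap_least Hl)) s Hm Hsl) Hs).
Qed.

Lemma gap_le_gap l l' : is_limit k l -> is_limit k l' -> l <o l' -> gap l' <o l ->
  gap l' <=o gap l.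
Proof.
  intros Hl Hl' Hll' Hgap. apply (proj2 (gap_least Hl')). split.
  - exact (olt_trans k _ _ _ (gap_lt Hl) Hll').
  - intros s Hs Hsl'. destruct (classic (s <o l)) as [Hsl|Hsl].
    + exact (proj2 (proj1 (gap_least Hl)) s Hs Hsl).
    + destruct (unmarked_above_gap Hl' (ole_trans (oltW Hgap) (ole_of_nlt Hsl)) Hsl' Hs).
Qed.

Lemma parity_mark_range l p : parity_mark l p ->
  gap l <=o p /\ p <=o succ (gap l) /\ succ p <o l.
Proof.
  intros [[Hl _] [->|[-> _]]]; pose proof (gap_lt Hl) as Hgl.
  - split; [apply ole_refl|split; [apply oltW, olt_succ|exact (osucc_lt_limit Hl Hgl)]].
  - split; [apply oltW, olt_succ|split; [apply ole_refl|]].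
    exact (osucc_lt_limit Hl (osucc_lt_limit Hl Hgl)).
Qed.

Lemma parity_mark_unmarked l p : parity_mark l p -> ~ marked p /\ ~ marked (succ p).
Proof.
  intros Hm. destruct (parity_mark_range Hm) as [Hp [_ Hsp]]. destruct Hm as [[Hl _] _].
  split; apply (unmarked_above_gap Hl).
  - exact Hp.
  - exact (olt_trans k _ _ _ (olt_succ p) Hsp).
  - exact (ole_trans Hp (oltW (olt_succ p))).
  - exact Hsp.
Qed.

Lemma parity_mark_owner l l' p : controlled l -> gap l <=o p -> p <o l ->
  parity_mark l' p -> l' = l.
Proof.
  intros [Hl Hml] Hp Hpl Hm'. destruct (parity_mark_range Hm') as [Hp' [_ Hsp']].
  destruct Hm' as [[Hl' Hml'] _].
  assert (Hpl' : p <o l') by exact (olt_trans k _ _ _ (olt_succ p) Hsp').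
  destruct (olt_total k l' l) as [Hll'|[Hll'|Hll']]; [exfalso|exact Hll'|exfalso].
  - exact (unmarked_above_gap Hl (ole_trans Hp (oltW Hpl')) Hll' Hml').
  - exact (unmarked_above_gap Hl' (ole_trans Hp' (oltW Hpl)) Hll' Hml).
Qed.

Lemma parity_mark_gap_le l l' p : is_limit k l -> gap l <=o p -> p <o l ->
  parity_mark l' p -> gap l' <=o gap l.
Proof.
  intros Hl Hp Hpl Hm. destruct (parity_mark_range Hm) as [Hp' [_ Hsp']].
  destruct Hm as [[Hl' Hml'] _].
  assert (Hpl' : p <o l') by exact (olt_trans k _ _ _ (olt_succ p) Hsp').
  destruct (olt_total k l' l) as [Hll'|[<-|Hll']].
  - destruct (unmarked_above_gap Hl (ole_trans Hp (oltW Hpl')) Hll' Hml').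
  - apply ole_refl.
  - exact (gap_le_gap Hl Hl' Hll' (ole_lt_trans Hp' Hpl)).
Qed.

Lemma guess_tail_below l b : is_limit k l -> succ (gap l) <o b -> b <o l -> guess b = false.
Proof.
  intros Hl Hb Hbl.
  assert (Hgb : gap l <=o b) by exact (oltW (olt_trans k _ _ _ (olt_succ _) Hb)).
  unfold guess. destruct (Wi (succ b)) eqn:Hsb.
  { destruct (unmarked_above_gap Hl (ole_trans Hgb (oltW (olt_succ b)))
                                 (osucc_lt_limit Hl Hbl)).
    now left. }
  apply to_bool_false. intros [[l' Hm]|[_ Hd]].
  - pose proof (parity_mark_gap_le Hl Hgb Hbl Hm) as Hgap.
    destruct (parity_mark_range Hm) as [_ [Hb' _]].
    exact (olt_nle Hb (ole_trans Hb' (osucc_le_mono Hgap))).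
  - apply (unmarked_above_gap Hl Hgb Hbl). now right.
Qed.

Lemma guess_eventually_false : exists G, forall b, G <=o b -> guess b = false.
Proof.
  destruct marked_bound as [G HG]. exists G. intros b Hb.
  assert (Hunm : forall s, b <=o s -> ~ marked s)
    by (intros s Hs Hm; exact (olt_nle (HG s Hm) (ole_trans Hb Hs))).
  unfold guess. destruct (Wi (succ b)) eqn:Hsb.
  { destruct (Hunm (succ b) (oltW (olt_succ b))). now left. }
  apply to_bool_false. intros [[l Hm]|[_ Hd]].
  - destruct (parity_mark_range Hm) as [_ [_ Hsbl]].
    apply (Hunm l (oltW (olt_trans k _ _ _ (olt_succ b) Hsbl))). apply Hm.
  - apply (Hunm b (ole_refl b)). now right.
Qed.

Lemma guess_full_record : full_record k guess.
Proof.
  split; [|exact guess_eventually_false].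
  intros l Hl. pose proof (gap_lt Hl) as Hgl.
  exists (succ (succ (gap l))). split.
  - exact (osucc_lt_limit Hl (osucc_lt_limit Hl Hgl)).
  - intros b Hb Hbl. exact (guess_tail_below Hl (olt_le_trans (olt_succ _) Hb) Hbl).
Qed.

Lemma guess_known p : Wi (succ p) = true -> guess p = Wj p.
Proof. intros Hsp. unfold guess. now rewrite Hsp. Qed.

Lemma guess_free p : In p d -> Wi (succ p) = false -> guess p = e.
Proof.
  intros Hd Hsp. unfold guess. rewrite Hsp. destruct e.
  - apply to_bool_true. right. now split.
  - apply to_bool_false. intros [[l Hm]|[He _]]; [|discriminate].
    apply (proj1 (parity_mark_unmarked Hm)). now right.
Qed.

Lemma guess_gap l : controlled l -> guess (gap l) = true.
Proof.
  intros Hc. assert (Hm : parity_mark l (gap l)) by (split; [exact Hc|now left]).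
  unfold guess. destruct (Wi (succ (gap l))) eqn:Hsg.
  - destruct (proj2 (parity_mark_unmarked Hm)). now left.
  - apply to_bool_true. left. now exists l.
Qed.

Lemma guess_gap_succ l : controlled l -> (guess (succ (gap l)) = true <-> F l).
Proof.
  intros Hc. pose proof (proj1 Hc) as Hl. pose proof (gap_lt Hl) as Hgl.
  assert (Hsgl : succ (gap l) <o l) by exact (osucc_lt_limit Hl Hgl).
  assert (Hgs : gap l <=o succ (gap l)) by exact (oltW (olt_succ _)).
  unfold guess. destruct (Wi (succ (succ (gap l)))) eqn:Hssg.
  { destruct (unmarked_above_gap Hl (ole_trans Hgs (oltW (olt_succ _)))
                                 (osucc_lt_limit Hl Hsgl)).
    now left. }
  rewrite to_bool_true. split.
  - intros [[l' Hm]|[_ Hd]].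
    + rewrite (parity_mark_owner Hc Hgs Hsgl Hm) in Hm.
      destruct Hm as [_ [Heq|[_ HF]]]; [|exact HF].
      pose proof (olt_succ (gap l)) as Hlt. rewrite Heq in Hlt.
      destruct (olt_irrefl k _ Hlt).
    + destruct (unmarked_above_gap Hl Hgs Hsgl). now right.
  - intros HF. left. exists l. split; [exact Hc|right; now split].
Qed.

Lemma guess_lpar l : controlled l ->
  (lpar_even k guess l <-> ~ (F l <-> even_ord k (succ (gap l)))).
Proof.
  intros Hc. pose proof (proj1 Hc) as Hl. pose proof (gap_lt Hl) as Hgl.
  destruct (classic (F l)) as [HF|HF].
  - assert (Hlast : lpar_even k guess l <-> even_ord k (succ (succ (gap l)))).
    { apply lpar_even_last_one;
        [exact Hl|exact (osucc_lt_limit Hl Hgl)|now apply guess_gap_succ|].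
      intros b Hb Hbl. exact (guess_tail_below Hl Hb Hbl). }
    rewrite Hlast, even_ord_succ. tauto.
  - assert (Hlast : lpar_even k guess l <-> even_ord k (succ (gap l))).
    { apply lpar_even_last_one; [exact Hl|exact Hgl|exact (guess_gap Hc)|].
      intros b Hb Hbl. destruct (osucc_le Hb) as [Hsb| <-];
        [exact (guess_tail_below Hl Hsb Hbl)|].
      destruct (guess (succ (gap l))) eqn:Hs; [|reflexivity].
      destruct HF. exact (proj1 (guess_gap_succ Hc) Hs). }
    rewrite Hlast. destruct (classic (even_ord k (succ (gap l)))); tauto.
Qed.

End Guess.

Lemma gap_local Wi Wi' d l : full_record k Wi -> full_record k Wi' -> is_limit k l ->
  (forall s, s <o l -> Wi s = Wi' s) -> gap Wi d l = gap Wi' d l.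
Proof.
  intros HWi HWi' Hl Heq. apply (least_unique (gap_least d HWi Hl) (gap_least d HWi' Hl)).
  intros g. unfold gap_candidate, marked.
  split; intros [Hgl Hg]; split; try exact Hgl; intros s Hs Hsl; apply (Hg s); try exact Hsl;
    [rewrite (Heq s Hsl)|rewrite <- (Heq s Hsl)]; exact Hs.
Qed.

Lemma lpar_even_local (r r' : k -> bool) l : (forall b, b <o l -> r b = r' b) ->
  (lpar_even k r l <-> lpar_even k r' l).
Proof.
  intros Heq.
  assert (Hz : forall o, (forall b, o <=o b -> b <o l -> r b = false) <->
                         (forall b, o <=o b -> b <o l -> r' b = false)).
  { intros o. split; intros Ho b Hob Hbl;
      [rewrite <- (Heq b Hbl)|rewrite (Heq b Hbl)]; exact (Ho b Hob Hbl). }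
  unfold lpar_even. split; intros [o [Hol [Ho [Hmin He]]]]; exists o;
    (split; [exact Hol|split; [now apply Hz|split; [|exact He]]]);
    intros o' Ho'l Ho'; apply Hmin; [exact Ho'l| |exact Ho'l|]; now apply Hz.
Qed.

Lemma parity_mark_local Wi Wi' d F F' be l p :
  full_record k Wi -> full_record k Wi' -> In be d -> p <o be ->
  (forall s, s <=o be -> Wi s = Wi' s) ->
  (forall l, l <=o be -> is_limit k l -> (F l <-> F' l)) ->
  parity_mark Wi d F l p -> parity_mark Wi' d F' l p.
Proof.
  intros HWi HWi' Hbe Hpb Heq HF Hm.
  destruct (parity_mark_range HWi Hm) as [Hgp _].
  destruct Hm as [[Hl Hml] Hpos].
  assert (Hlbe : l <=o be).
  { apply ole_of_nlt. intros Hbel.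
    apply (unmarked_above_gap HWi Hl (ole_trans Hgp (oltW Hpb)) Hbel). now right. }
  assert (Hgap : gap Wi d l = gap Wi' d l).
  { apply (gap_local d HWi HWi' Hl). intros s Hs. exact (Heq s (oltW (olt_le_trans Hs Hlbe))). }
  split; [split; [exact Hl|]|].
  - unfold marked in *. rewrite <- (Heq l Hlbe). exact Hml.
  - rewrite <- Hgap, <- (HF l Hlbe Hl). exact Hpos.
Qed.

Lemma guess_local Wi Wi' Wj Wj' d F F' e be b :
  full_record k Wi -> full_record k Wi' -> In be d -> b <o be ->
  (forall s, s <=o be -> Wi s = Wi' s /\ Wj s = Wj' s) ->
  (forall l, l <=o be -> is_limit k l -> (F l <-> F' l)) ->
  guess Wi Wj d F e b = guess Wi' Wj' d F' e b.
Proof.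
  intros HWi HWi' Hbe Hb Heq HF. unfold guess.
  rewrite (proj1 (Heq (succ b) (osucc_le Hb))), (proj2 (Heq b (oltW Hb))).
  destruct (Wi' (succ b)); [reflexivity|]. apply to_bool_ext.
  assert (HeqI : forall s, s <=o be -> Wi s = Wi' s) by (intros s Hs; apply Heq, Hs).
  split; intros [[l Hm]|Hd]; try (right; exact Hd); left; exists l.
  - exact (parity_mark_local HWi HWi' Hbe Hb HeqI HF Hm).
  - refine (parity_mark_local HWi' HWi Hbe Hb _ _ Hm).
    + intros s Hs. symmetry. exact (HeqI s Hs).
    + intros l' Hl' Hlim. symmetry. exact (HF l' Hl' Hlim).
Qed.

Lemma guess_ext Wi Wj Wj' d F F' e :
  (forall p, Wi (succ p) = true -> Wj p = Wj' p) ->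
  (forall l, is_limit k l -> (F l <-> F' l)) ->
  guess Wi Wj d F e = guess Wi Wj' d F' e.
Proof.
  intros HWj HF. apply functional_extensionality. intros p. unfold guess.
  destruct (Wi (succ p)) eqn:Hsp; [exact (HWj p Hsp)|].
  apply to_bool_ext. unfold parity_mark.
  split; intros [[l [[Hl Hml] Hpos]]|Hd]; try (right; exact Hd); left; exists l;
    (split; [split; assumption|]); [rewrite <- (HF l Hl)|rewrite (HF l Hl)]; exact Hpos.
Qed.

Definition parity_flag (Wi Wj : k -> bool) (d : list k) (e : bool) (l : k) : Prop :=
  if Wi l then ~ (even_ord k (succ (gap Wi d l)) <-> lpar_even k Wj l) else e = true.

Lemma parity_flag_local Wi Wi' Wj Wj' d e l :
  full_record k Wi -> full_record k Wi' -> is_limit k l ->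
  (forall s, s <=o l -> Wi s = Wi' s /\ Wj s = Wj' s) ->
  (parity_flag Wi Wj d e l <-> parity_flag Wi' Wj' d e l).
Proof.
  intros HWi HWi' Hl Heq. unfold parity_flag.
  assert (Hbelow : forall s, s <o l -> Wi s = Wi' s /\ Wj s = Wj' s)
    by (intros s Hs; exact (Heq s (oltW Hs))).
  rewrite (proj1 (Heq l (ole_refl l))),
    (gap_local d HWi HWi' Hl (fun s Hs => proj1 (Hbelow s Hs))).
  destruct (Wi' l); [|reflexivity].
  rewrite (lpar_even_local (fun b Hb => proj2 (Hbelow b Hb))). reflexivity.
Qed.

Lemma guess_flag_lpar_known Wi Wj d e l : full_record k Wi -> is_limit k l -> Wi l = true ->
  (lpar_even k (guess Wi Wj d (parity_flag Wi Wj d e) e) l <-> lpar_even k Wj l).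
Proof.
  intros HWi Hl Hil. rewrite (guess_lpar Wj _ e HWi (conj Hl (or_introl Hil))).
  unfold parity_flag. rewrite Hil.
  destruct (classic (even_ord k (succ (gap Wi d l)))), (classic (lpar_even k Wj l)); tauto.
Qed.

Lemma guess_flag_lpar_free Wi Wj d e l :
  full_record k Wi -> is_limit k l -> Wi l = false -> In l d ->
  (lpar_even k (guess Wi Wj d (parity_flag Wi Wj d e) e) l <->
   (if e then ~ even_ord k (succ (gap Wi d l)) else even_ord k (succ (gap Wi d l)))).
Proof.
  intros HWi Hl Hil Hd. rewrite (guess_lpar Wj _ e HWi (conj Hl (or_intror Hd))).
  unfold parity_flag. rewrite Hil.
  destruct e;
    [assert (He : true = true) by reflexivity|assert (He : false <> true) by discriminate];
    destruct (classic (even_ord k (succ (gap Wi d l)))); tauto.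
Qed.

Lemma restr_agree al u w : restr al u = restr al w ->
  w0 u = w0 w /\ forall p x, x <o al -> wpl p u x = wpl p w x.
Proof.
  intros Hr. split; [exact (f_equal (@s0 k al) Hr)|].
  intros p x Hx. destruct p;
    [pose proof (f_equal (@sa k al) Hr) as Hp|pose proof (f_equal (@sb k al) Hr) as Hp];
    exact (f_equal (fun f => f (exist _ x Hx)) Hp).
Qed.

Lemma mkWsub_eq be c c' a a' b b' Ha Ha' Hb Hb' : c = c' -> a = a' -> b = b' ->
  @mkWsub k be c a b Ha Hb = @mkWsub k be c' a' b' Ha' Hb'.
Proof. intros <- <- <-. f_equal; apply proof_irrelevance. Qed.

Lemma restr_ext be u w : w0 u = w0 w -> (forall p x, x <o be -> wpl p u x = wpl p w x) ->
  restr be u = restr be w.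
Proof.
  intros H0 H. unfold restr. apply mkWsub_eq; [exact H0| |];
    apply functional_extensionality; intros [x Hx]; [exact (H pa x Hx)|exact (H pb x Hx)].
Qed.

Definition wpl_rec (p : player) (w : Wk k) : full_record k (wpl p w) :=
  match p return full_record k (wpl p w) with pa => wa_rec w | pb => wb_rec w end.

Section Sampling.
Variable i : player.

Lemma player_cases p : p = i \/ p = other i.
Proof. destruct p, i; simpl; auto. Qed.

Definition world_of (c : coin) (ri rj : k -> bool) (Hi : full_record k ri)
  (Hj : full_record k rj) : Wk k :=
  match i with pa => @mkWk k c ri rj Hi Hj | pb => @mkWk k c rj ri Hj Hi end.

Lemma world_of_i c ri rj Hi Hj : wpl i (@world_of c ri rj Hi Hj) = ri.
Proof. unfold world_of. now destruct i. Qed.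

Lemma world_of_j c ri rj Hi Hj : wpl (other i) (@world_of c ri rj Hi Hj) = rj.
Proof. unfold world_of. now destruct i. Qed.

Lemma world_of_w0 c ri rj Hi Hj : w0 (@world_of c ri rj Hi Hj) = c.
Proof. unfold world_of. now destruct i. Qed.

Lemma world_of_eq c c' ri ri' rj rj' Hi Hi' Hj Hj' : c = c' -> ri = ri' -> rj = rj' ->
  @world_of c ri rj Hi Hj = @world_of c' ri' rj' Hi' Hj'.
Proof. intros <- <- <-. f_equal; apply proof_irrelevance. Qed.

Definition sample_coin (w : Wk k) (e : bool) : coin :=
  if wpl i w zero then w0 w else if e then t else h.

Definition sample_rec (w : Wk k) (d : list k) (e : bool) : k -> bool :=
  guess (wpl i w) (wpl (other i) w) d (parity_flag (wpl i w) (wpl (other i) w) d e) e.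

Definition sample (w : Wk k) (d : list k) (e : bool) : Wk k :=
  world_of (sample_coin w e) (wpl_rec i w)
    (guess_full_record (wpl (other i) w) d (parity_flag (wpl i w) (wpl (other i) w) d e) e
       (wpl_rec i w)).

Lemma sample_i w d e : wpl i (sample w d e) = wpl i w.
Proof. apply world_of_i. Qed.

Lemma sample_j w d e : wpl (other i) (sample w d e) = sample_rec w d e.
Proof. apply world_of_j. Qed.

Lemma sample_w0 w d e : w0 (sample w d e) = sample_coin w e.
Proof. apply world_of_w0. Qed.

Lemma sample_Pinfo w d e : Pinfo i w (sample w d e).
Proof.
  unfold Pinfo; cbv zeta. rewrite sample_i, sample_j, sample_w0.
  split; [reflexivity|split; [|split]].
  - intros H0. unfold sample_coin. now rewrite H0.
  - intros be Hbe. exact (guess_known _ _ _ _ Hbe).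
  - intros l Hl Hil. exact (guess_flag_lpar_known _ _ _ (wpl_rec i w) Hl Hil).
Qed.

Lemma sample_Pinfo_invariant w u d e : Pinfo i w u -> sample u d e = sample w d e.
Proof.
  intros [Hi [H0 [Hsucc Hlim]]]. apply world_of_eq.
  - unfold sample_coin. rewrite Hi. destruct (wpl i w zero); [now apply H0|reflexivity].
  - exact Hi.
  - rewrite Hi. apply guess_ext; [exact Hsucc|].
    intros l Hl. unfold parity_flag. destruct (wpl i w l) eqn:Hil; [|reflexivity].
    rewrite (Hlim l Hl Hil). reflexivity.
Qed.

Lemma sample_coin_restr al u w e : zero <o al -> restr al u = restr al w ->
  sample_coin u e = sample_coin w e.
Proof.
  intros Hal Hr. destruct (restr_agree Hr) as [H0 Hp].
  unfold sample_coin. rewrite H0, (Hp i zero Hal). reflexivity.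
Qed.

Lemma sample_restr be al u w d e : In be d -> be <o al -> restr al u = restr al w ->
  restr be (sample u d e) = restr be (sample w d e).
Proof.
  intros Hbe Hbal Hr. destruct (restr_agree Hr) as [_ Hp].
  assert (Hagree : forall s, s <=o be ->
            wpl i u s = wpl i w s /\ wpl (other i) u s = wpl (other i) w s)
    by (intros s Hs; split; apply Hp; exact (ole_lt_trans Hs Hbal)).
  apply restr_ext.
  - rewrite !sample_w0. exact (sample_coin_restr e (ole_lt_trans (ozero_le be) Hbal) Hr).
  - intros p b Hb. destruct (player_cases p) as [->| ->].
    + rewrite !sample_i. exact (proj1 (Hagree b (oltW Hb))).
    + rewrite !sample_j. apply (guess_local _ (wpl_rec i u) (wpl_rec i w) Hbe Hb Hagree).
      intros l Hl Hlim. apply (parity_flag_local d e (wpl_rec i u) (wpl_rec i w) Hlim).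
      intros s Hs. exact (Hagree s (ole_trans Hs Hl)).
Qed.

Variable U : ultrafilter (list k).
Hypothesis U_In : forall x, U (fun d => In x d).

Definition belief (w : Wk k) (A : Wk k -> Prop) : R :=
  / 2 * uf_mass U (fun d => A (sample w d false)) + / 2 * uf_mass U (fun d => A (sample w d true)).

Lemma belief_fa_prob w : fa_prob (belief w).
Proof.
  exact (fa_prob_avg (fa_prob_comap (fun d => sample w d false) (uf_mass_fa_prob U))
                     (fa_prob_comap (fun d => sample w d true) (uf_mass_fa_prob U))).
Qed.

Lemma belief_sure w A : (forall d e, A (sample w d e)) -> belief w A = 1.
Proof. intros HA. unfold belief. rewrite !uf_mass_all by (intros d; apply HA). lra. Qed.

Lemma belief_half w A Q : U Q ->
  (forall d, Q d -> (A (sample w d true) <-> ~ A (sample w d false))) -> belief w A = / 2.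
Proof. intros HQ HA. unfold belief. pose proof (uf_mass_compl HQ HA). lra. Qed.

Lemma belief_congr u w A B Q : U Q ->
  (forall d e, Q d -> (A (sample u d e) <-> B (sample w d e))) -> belief u A = belief w B.
Proof.
  intros HQ HAB. unfold belief.
  rewrite (uf_mass_congr HQ (fun d Hd => HAB d false Hd)),
    (uf_mass_congr HQ (fun d Hd => HAB d true Hd)).
  reflexivity.
Qed.

Lemma belief_Pinfo_invariant w u : Pinfo i w u -> belief u = belief w.
Proof.
  intros Hu. assert (Hs : sample u = sample w).
  { apply functional_extensionality. intros d. apply functional_extensionality. intros e.
    exact (sample_Pinfo_invariant d e Hu). }
  unfold belief. now rewrite Hs.
Qed.

Lemma belief_Pinfo w : belief w (Pinfo i w) = 1.
Proof. apply belief_sure. exact (sample_Pinfo w). Qed.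

Lemma belief_coin w : belief w (fun u => w0 u = w0 w) = if wpl i w zero then 1 else / 2.
Proof.
  destruct (wpl i w zero) eqn:Hz.
  - apply belief_sure. intros d e. destruct (sample_Pinfo w d e) as [_ [H0 _]]. exact (H0 Hz).
  - apply (belief_half (Q := fun _ => True)); [apply uf_full|]. intros d _.
    rewrite !sample_w0. unfold sample_coin. rewrite Hz. destruct (w0 w); split; congruence.
Qed.

Lemma belief_succ w be :
  belief w (fun u => wpl (other i) u be = wpl (other i) w be)
  = if wpl i w (succ be) then 1 else / 2.
Proof.
  destruct (wpl i w (succ be)) eqn:Hk.
  - apply belief_sure. intros d e. destruct (sample_Pinfo w d e) as [_ [_ [Hsucc _]]].
    exact (Hsucc be Hk).
  - apply (belief_half (U_In be)). intros d Hd. rewrite !sample_j. unfold sample_rec.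
    rewrite (guess_free _ _ false (wpl_rec i w) Hd Hk), (guess_free _ _ true (wpl_rec i w) Hd Hk).
    destruct (wpl (other i) w be); split; congruence.
Qed.

Lemma belief_lpar w l : is_limit k l ->
  belief w (fun u => lpar_even k (wpl (other i) u) l <-> lpar_even k (wpl (other i) w) l)
  = if wpl i w l then 1 else / 2.
Proof.
  intros Hl. destruct (wpl i w l) eqn:Hil.
  - apply belief_sure. intros d e. destruct (sample_Pinfo w d e) as [_ [_ [_ Hlim]]].
    exact (Hlim l Hl Hil).
  - apply (belief_half (U_In l)). intros d Hd. rewrite !sample_j. unfold sample_rec.
    rewrite (guess_flag_lpar_free _ true (wpl_rec i w) Hl Hil Hd),
      (guess_flag_lpar_free _ false (wpl_rec i w) Hl Hil Hd).
    destruct (classic (even_ord k (succ (gap (wpl i w) d l)))),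
      (classic (lpar_even k (wpl (other i) w) l)); tauto.
Qed.

Lemma belief_restr_coin al u w (E : coin -> Prop) : zero <o al -> restr al u = restr al w ->
  belief u (fun x => E (w0 x)) = belief w (fun x => E (w0 x)).
Proof.
  intros Hal Hr. apply (belief_congr (Q := fun _ => True)); [apply uf_full|].
  intros d e _. rewrite !sample_w0, (sample_coin_restr e Hal Hr). reflexivity.
Qed.

Lemma belief_restr be al u w (E : Wsub k be -> Prop) : be <o al -> restr al u = restr al w ->
  belief u (fun x => E (restr be x)) = belief w (fun x => E (restr be x)).
Proof.
  intros Hbal Hr. apply (belief_congr (U_In be)). intros d e Hd.
  rewrite (sample_restr e Hd Hbal Hr). reflexivity.
Qed.

End Sampling.
End Kappa.

Theorem theorem2 (k : RegCard) (i : player) :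
  exists T : Wk k -> (Wk k -> Prop) -> R,
    (forall w : Wk k,
       fa_prob (T w) /\
       (* (a) *)
       (forall u, Pinfo i w u -> T u = T w) /\
       (* (b) *)
       T w (Pinfo i w) = 1 /\
       (* (c) *)
       T w (fun u => w0 u = w0 w) = (if wpl i w (ozero k) then 1 else / 2) /\
       (* (d) *)
       (forall be : k,
          T w (fun u => wpl (other i) u be = wpl (other i) w be)
          = (if wpl i w (osucc k be) then 1 else / 2)) /\
       (* (e) *)
       (forall l : k, is_limit k l ->
          T w (fun u => lpar_even k (wpl (other i) u) l <-> lpar_even k (wpl (other i) w) l)
          = (if wpl i w l then 1 else / 2))) /\
    (* (f), case beta = 0 : W^0 = {h,t}, pi_{0,kappa} u = u_0 *)
    (forall (al : k) (u w : Wk k) (E : coin -> Prop),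
       olt k (ozero k) al -> restr al u = restr al w ->
       T u (fun x => E (w0 x)) = T w (fun x => E (w0 x))) /\
    (* (f), case 0 < beta < alpha < kappa *)
    (forall (be al : k) (u w : Wk k) (E : Wsub k be -> Prop),
       ~ is_zero k be -> olt k be al -> restr al u = restr al w ->
       T u (fun x => E (restr be x)) = T w (fun x => E (restr be x))).
Proof.
  destruct (list_ultrafilter_exists (ord k)) as [U U_In].
  exists (belief i U). split; [intros w|split].
  - split; [apply belief_fa_prob|].
    split; [intros u; apply belief_Pinfo_invariant|].
    split; [apply belief_Pinfo|].
    split; [apply belief_coin|].
    split; [intros be; exact (belief_succ i U_In w be)|].
    intros l Hl. exact (belief_lpar i U_In w Hl).
  - intros al u w E Hal Hr. exact (belief_restr_coin i U E Hal Hr).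
  - intros be al u w E _ Hbal Hr. exact (belief_restr i U_In E Hbal Hr).
Qed.
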